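(* Let $b\in\mathbb{Z}\setminus\{1,-1\}$ be odd. Then the $D_2$-symmetric curves $g^\varepsilon$ representing the torus knot class $\mathcal{T}(2,b)$, defined in the context, converge strongly in $W^{2,2}(\mathbb{R}/\mathbb{Z},\mathbb{R}^3)$ to the curve $\mathrm{tpc}[\pi]$ as $\varepsilon\to0$.
   Context: $R_1=\mathrm{diag}(1,-1,-1)$, $R_2=\mathrm{diag}(-1,1,-1)$, $R_3=\mathrm{diag}(-1,-1,1)$. For an arc $\alpha:[0,1/4]\to\mathbb{R}^3$ let $G[\alpha]$ be the $1$-periodic curve with $G[\alpha](t)=\alpha(t)$ on $[0,1/4)$, $R_1\alpha(1/2-t)$ on $[1/4,1/2)$, $R_2\alpha(t-1/2)$ on $[1/2,3/4)$, $R_3\alpha(1-t)$ on $[3/4,1)$. Define $\mathrm{tpc}[\pi]=G[\alpha_2]$ with $\alpha_2(t)=\frac1{4\pi}(1-\cos4\pi t,\ \sin4\pi t,\ 0)$ (a planar figure-eight of two tangent circles of radius $1/(4\pi)$). Construction for odd $b\ge3$ and $0<\varepsilon<1/(4(b+1))$: set $\rho=\varepsilon^2$ and $r=(1/4-(b+1)\varepsilon)/\pi>0$. Let $\phi(t)=t$ for $t\in[0,\frac{b-1}2]$, $\phi(t)=\frac b2-\frac12(t-\frac{b+1}2)^2$ for $t\in[\frac{b-1}2,\frac{b+1}2]$, $\phi(t)=\frac b2$ for $t\ge\frac{b+1}2$, and $\phi_\varepsilon(t)=\pi\phi(t/\varepsilon)$. Helical part: $h^\varepsilon(t)=(\rho(-1)^{(b-1)/2}\sin\phi_\varepsilon(t),\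 t,\ \rho\cos\phi_\varepsilon(t))$. Stadium part: for $t\in[\frac{(b+1)\varepsilon}2,\frac14-\frac{(b+1)\varepsilon}2]$, $\sigma^\varepsilon(t)=(\rho+r-r\cos(\frac1r(t-\frac{(b+1)\varepsilon}2)),\ \frac{(b+1)\varepsilon}2+r\sin(\frac1r(t-\frac{(b+1)\varepsilon}2)),\ 0)$; for $t\in[\frac14-\frac{(b+1)\varepsilon}2,\frac14]$, $\sigma^\varepsilon(t)=(\rho+2r,\ \frac14-t,\ 0)$. Let $\alpha^\varepsilon=h^\varepsilon$ on $[0,\frac{(b+1)\varepsilon}2]$ and $\alpha^\varepsilon=\sigma^\varepsilon$ on $(\frac{(b+1)\varepsilon}2,\frac14]$, and $g^\varepsilon=G[\alpha^\varepsilon]$; this is a $C^{1,1}$ closed $D_2$-symmetric curve of knot type $\mathcal{T}(2,b)$. For odd $b\le-3$, let $g^\varepsilon$ be the image under the reflection $(x,y,z)\mapsto(x,y,-z)$ of the curve constructed for $|b|$; it is $D_2$-symmetric and of knot type $\mathcal{T}(2,b)$. *)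

From Stdlib Require Import Reals ZArith.
From Coquelicot Require Import Coquelicot.
Open Scope R_scope.

Definition v3 : Type := (R * R * R)%type.
Definition mk3 (x y z : R) : v3 := (x, y, z).
Definition cx (p : v3) : R := fst (fst p).
Definition cy (p : v3) : R := snd (fst p).
Definition cz (p : v3) : R := snd p.

Definition Rf1 (p : v3) : v3 := mk3 (cx p) (- cy p) (- cz p).
Definition Rf2 (p : v3) : v3 := mk3 (- cx p) (cy p) (- cz p).
Definition Rf3 (p : v3) : v3 := mk3 (- cx p) (- cy p) (cz p).

Definition Gcurve (alpha : R -> v3) (t : R) : v3 :=
  let s := frac_part t in
  if Rlt_dec s (1/4) then alpha s
  else if Rlt_dec s (1/2) then Rf1 (alpha (1/2 - s))
  else if Rlt_dec s (3/4) then Rf2 (alpha (s - 1/2))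
  else Rf3 (alpha (1 - s)).

Definition alpha2 (t : R) : v3 :=
  mk3 (/(4*PI) * (1 - cos (4*PI*t))) (/(4*PI) * sin (4*PI*t)) 0.
Definition tpc_pi : R -> v3 := Gcurve alpha2.

(* The construction for odd b >= 3 (b given as a natural number). *)
Definition phi_b (b : nat) (t : R) : R :=
  let B := INR b in
  if Rle_dec t ((B - 1)/2) then t
  else if Rle_dec t ((B + 1)/2) then B/2 - /2 * (t - (B + 1)/2)^2
  else B/2.
Definition phi_eps (b : nat) (eps t : R) : R := PI * phi_b b (t / eps).
Definition rho_eps (eps : R) : R := eps ^ 2.
Definition r_eps (b : nat) (eps : R) : R := (/4 - (INR b + 1) * eps) / PI.

Definition helix (b : nat) (eps t : R) : v3 :=
  mk3 (rho_eps eps * (-1) ^ ((b - 1) / 2)%nat * sin (phi_eps b eps t))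
      t
      (rho_eps eps * cos (phi_eps b eps t)).

Definition stadium (b : nat) (eps t : R) : v3 :=
  let c := (INR b + 1) * eps / 2 in
  let r := r_eps b eps in
  let rho := rho_eps eps in
  if Rle_dec t (/4 - c) then
    mk3 (rho + r - r * cos (/r * (t - c))) (c + r * sin (/r * (t - c))) 0
  else mk3 (rho + 2 * r) (/4 - t) 0.

Definition alpha_eps (b : nat) (eps t : R) : v3 :=
  if Rle_dec t ((INR b + 1) * eps / 2) then helix b eps t else stadium b eps t.

Definition g_pos (b : nat) (eps : R) : R -> v3 := Gcurve (alpha_eps b eps).

Definition reflz (p : v3) : v3 := mk3 (cx p) (cy p) (- cz p).

Definition g_eps (b : Z) (eps : R) : R -> v3 :=
  if Z.ltb 0 b then g_pos (Z.to_nat b) eps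
  else fun t => reflz (g_pos (Z.to_nat (- b)) eps t).

(* Squared W^{2,2}(R/Z) norm of a 1-periodic scalar function, computed
   with classical (a.e.) derivatives over one period [0,1]. *)
Definition W22sq (u : R -> R) : R :=
  RInt (fun t => (u t)^2 + (Derive u t)^2 + (Derive (Derive u) t)^2) 0 1.

Definition W22dist (f g : R -> v3) : R :=
  sqrt (W22sq (fun t => cx (f t) - cx (g t))
      + W22sq (fun t => cy (f t) - cy (g t))
      + W22sq (fun t => cz (f t) - cz (g t))).

From Stdlib Require Import Reals ZArith Lra Lia FunctionalExtensionality.
From Coquelicot Require Import Coquelicot.
Open Scope R_scope.

(* The curve g^eps differs from tpc[pi] in two places only.  Near the double
   points it follows a helix of length (|b|+1) eps whose value and first two
   derivatives stay bounded uniformly in eps (its radius eps^2 compensates the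
   factor eps^-2 in the second derivative of its phase).  Elsewhere it runs
   along circular arcs of radius (1/4 - (|b|+1) eps)/pi -> 1/(4 pi), which are
   O(eps)-close in C^2 to the circles of tpc[pi].  On each of the sixteen
   pieces cut out by the D_2 symmetry and the break points both curves are
   smooth, and a piece contributes at most 3 (bound)^2 (length) to the squared
   W^{2,2} distance; hence this square is O(eps). *)

Lemma Derive_ext_open_interval (F G : R -> R) (u v s : R) :
  (forall y, u < y < v -> F y = G y) -> u < s < v -> Derive F s = Derive G s.
Proof.
  intros E Hs. apply Derive_ext_loc.
  apply (filter_imp (fun y => u < y < v)); [exact E|].
  exact (open_and _ _ (open_gt u) (open_lt v) s Hs).
Qed.

Lemma is_derive_affine_comp (f : R -> R) (e m h x l : R) :
  is_derive f (m * x + h) l -> is_derive (fun y => e * f (m * y + h)) x (e * m * l).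
Proof.
  intros Hf. rewrite Rmult_assoc.
  apply (is_derive_scal (fun y => f (m * y + h))).
  apply (is_derive_comp f (fun y => m * y + h)); [exact Hf|].
  auto_derive; [easy | ring].
Qed.

Lemma Rabs_sub_le (a b : R) : Rabs (a - b) <= Rabs a + Rabs b.
Proof. rewrite <- (Rabs_Ropp b); apply Rabs_triang. Qed.

Lemma Rabs_mult_le (a b A B : R) : Rabs a <= A -> Rabs b <= B -> Rabs (a * b) <= A * B.
Proof.
  intros Ha Hb; rewrite Rabs_mult.
  apply Rmult_le_compat; auto using Rabs_pos.
Qed.

Lemma Rabs_sin_le_1 (x : R) : Rabs (sin x) <= 1.
Proof. apply Rabs_le, SIN_bound. Qed.

Lemma Rabs_cos_le_1 (x : R) : Rabs (cos x) <= 1.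
Proof. apply Rabs_le, COS_bound. Qed.

Lemma Rabs_sin_sub_le (a b : R) : Rabs (sin a - sin b) <= Rabs (a - b).
Proof.
  rewrite <- (Rmult_1_l (Rabs (a - b))).
  apply (bounded_variation sin cos); intros t _; split.
  - apply is_derive_Reals, derivable_pt_lim_sin.
  - apply Rabs_cos_le_1.
Qed.

Lemma Rabs_cos_sub_le (a b : R) : Rabs (cos a - cos b) <= Rabs (a - b).
Proof.
  rewrite <- (Rmult_1_l (Rabs (a - b))).
  apply (bounded_variation cos (fun t => - sin t)); intros t _; split.
  - apply is_derive_Reals, derivable_pt_lim_cos.
  - rewrite Rabs_Ropp; apply Rabs_sin_le_1.
Qed.

(** * Pieces with bounded C^2 extensions *)

Definition w22_density (F : R -> R) (t : R) : R :=
  (F t)^2 + (Derive F t)^2 + (Derive (Derive F) t)^2.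

Definition has_RInt_le (f : R -> R) (a b B : R) : Prop :=
  exists I, is_RInt f a b I /\ I <= B.

Lemma has_RInt_le_Chasles (f : R -> R) (a b c B1 B2 : R) :
  has_RInt_le f a b B1 -> has_RInt_le f b c B2 -> has_RInt_le f a c (B1 + B2).
Proof.
  intros [I1 [H1 B1le]] [I2 [H2 B2le]].
  exists (I1 + I2); split; [|lra].
  exact (is_RInt_Chasles f a b c I1 I2 H1 H2).
Qed.

(* Only the open interval is constrained: at the break points of a piecewise
   curve [Derive] returns junk values, which [is_RInt] never sees. *)
Definition C2_piece (D : R -> R) (p q K : R) : Prop :=
  exists f f1 f2 : R -> R,
    (forall x, is_derive f x (f1 x)) /\ (forall x, is_derive f1 x (f2 x)) /\
    (forall x, continuous f2 x) /\
    (forall t, p <= t <= q -> Rabs (f t) <= K /\ Rabs (f1 t) <= K /\ Rabs (f2 t) <= K) /\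
    (forall t, p < t < q -> D t = f t).

Lemma C2_piece_intro (D f f1 f2 : R -> R) (p q K : R) :
  (forall x, is_derive f x (f1 x)) -> (forall x, is_derive f1 x (f2 x)) ->
  (forall x, continuous f2 x) ->
  (forall t, p <= t <= q -> Rabs (f t) <= K /\ Rabs (f1 t) <= K /\ Rabs (f2 t) <= K) ->
  (forall t, p < t < q -> D t = f t) -> C2_piece D p q K.
Proof. intros; exists f, f1, f2; tauto. Qed.

Lemma C2_piece_ext (D D' : R -> R) (p q K : R) :
  (forall t, p < t < q -> D t = D' t) -> C2_piece D' p q K -> C2_piece D p q K.
Proof.
  intros E [f [f1 [f2 [d1 [d2 [c2 [B E']]]]]]].
  apply (C2_piece_intro D f f1 f2); auto.
  intros t Ht; rewrite E, E'; auto.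
Qed.

Lemma C2_piece_weaken (D : R -> R) (p q K K' : R) :
  K <= K' -> C2_piece D p q K -> C2_piece D p q K'.
Proof.
  intros HK [f [f1 [f2 [d1 [d2 [c2 [B E]]]]]]].
  apply (C2_piece_intro D f f1 f2); auto.
  intros t Ht; destruct (B t Ht) as [? [? ?]]; repeat split; lra.
Qed.

Lemma C2_piece_restrict (D : R -> R) (p q p' q' K : R) :
  p <= p' -> q' <= q -> C2_piece D p q K -> C2_piece D p' q' K.
Proof.
  intros Hp Hq [f [f1 [f2 [d1 [d2 [c2 [B E]]]]]]].
  apply (C2_piece_intro D f f1 f2); auto.
  - intros t Ht; apply B; lra.
  - intros t Ht; apply E; lra.
Qed.

Lemma C2_piece_sub (A B : R -> R) (p q KA KB : R) :
  C2_piece A p q KA -> C2_piece B p q KB ->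
  C2_piece (fun t => A t - B t) p q (KA + KB).
Proof.
  intros [f [f1 [f2 [d1 [d2 [c2 [BA EA]]]]]]] [g [g1 [g2 [e1 [e2 [c2' [BB EB]]]]]]].
  apply (C2_piece_intro _ (fun t => f t - g t) (fun t => f1 t - g1 t) (fun t => f2 t - g2 t)).
  - intros x; apply (is_derive_minus f g); auto.
  - intros x; apply (is_derive_minus f1 g1); auto.
  - intros x; apply (continuous_minus f2 g2); auto.
  - intros t Ht; destruct (BA t Ht) as [? [? ?]], (BB t Ht) as [? [? ?]].
    repeat split; (eapply Rle_trans; [apply Rabs_sub_le|]; lra).
  - intros t Ht; rewrite EA, EB; auto.
Qed.

Lemma C2_piece_affine (a b p q K : R) :
  0 <= K -> Rabs b <= K -> (forall t, p <= t <= q -> Rabs (a + b * t) <= K) ->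
  C2_piece (fun t => a + b * t) p q K.
Proof.
  intros HK Hb Hf.
  apply (C2_piece_intro _ (fun t => a + b * t) (fun _ => b) (fun _ => 0)); auto.
  - intros x; auto_derive; [easy | ring].
  - intros x; auto_derive; [easy | ring].
  - intros x; apply continuous_const.
  - intros t Ht; rewrite Rabs_R0; auto.
Qed.

Lemma C2_piece_sin_phase (a κ p q K : R) (φ φ1 : R -> R) :
  (forall x, is_derive φ x (φ1 x)) -> (forall x, is_derive φ1 x κ) ->
  (forall t, p <= t <= q ->
     Rabs a <= K /\ Rabs (a * φ1 t) <= K /\ Rabs (a * κ) + Rabs (a * φ1 t * φ1 t) <= K) ->
  C2_piece (fun t => a * sin (φ t)) p q K.
Proof.
  intros d1 d2 Hb.
  assert (Dφ : forall x, Derive φ x = φ1 x) by (intros x; apply is_derive_unique, d1).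
  assert (Dφ1 : forall x, Derive φ1 x = κ) by (intros x; apply is_derive_unique, d2).
  assert (Eφ : forall x, ex_derive φ x) by (intros x; eexists; apply d1).
  assert (Eφ1 : forall x, ex_derive φ1 x) by (intros x; eexists; apply d2).
  apply (C2_piece_intro _ (fun t => a * sin (φ t)) (fun t => a * φ1 t * cos (φ t))
           (fun t => a * κ * cos (φ t) - a * φ1 t * φ1 t * sin (φ t))); auto.
  - intros x; auto_derive; auto. rewrite Dφ; ring.
  - intros x; auto_derive; auto. rewrite Dφ, Dφ1; ring.
  - intros x.
    apply (ex_derive_continuous (fun t => a * κ * cos (φ t) - a * φ1 t * φ1 t * sin (φ t))).
    auto_derive; auto.
  - intros t Ht; destruct (Hb t Ht) as [B0 [B1 B2]].
    pose proof (Rabs_sin_le_1 (φ t)) as Hs; pose proof (Rabs_cos_le_1 (φ t)) as Hc.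
    pose proof (Rabs_pos a); pose proof (Rabs_pos (a * φ1 t)).
    pose proof (Rabs_pos (a * κ)); pose proof (Rabs_pos (a * φ1 t * φ1 t)).
    rewrite !Rabs_mult in *; split; [nra | split; [nra |]].
    eapply Rle_trans; [apply Rabs_sub_le|]; rewrite !Rabs_mult; nra.
Qed.

Lemma w22_density_copy (F f f1 f2 : R -> R) (e m h u v s : R) :
  (forall x, is_derive f x (f1 x)) -> (forall x, is_derive f1 x (f2 x)) ->
  e * e = 1 -> m * m = 1 ->
  (forall y, u < y < v -> F y = e * f (m * y + h)) -> u < s < v ->
  w22_density F s = f (m * s + h) ^ 2 + f1 (m * s + h) ^ 2 + f2 (m * s + h) ^ 2.
Proof.
  intros d1 d2 He Hm EF Hs.
  assert (DF : forall y, u < y < v -> Derive F y = e * m * f1 (m * y + h)).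
  { intros y Hy. rewrite (Derive_ext_open_interval F (fun y => e * f (m * y + h)) u v y EF Hy).
    apply is_derive_unique, is_derive_affine_comp, d1. }
  assert (DDF : Derive (Derive F) s = e * m * m * f2 (m * s + h)).
  { rewrite (Derive_ext_open_interval _ (fun y => e * m * f1 (m * y + h)) u v s DF Hs).
    apply is_derive_unique, is_derive_affine_comp, d2. }
  unfold w22_density; rewrite EF, DF, DDF by exact Hs.
  transitivity ((e * e) * (f (m * s + h) ^ 2 + (m * m) * f1 (m * s + h) ^ 2
                           + (m * m) * (m * m) * f2 (m * s + h) ^ 2)); [ring|].
  rewrite He, Hm; ring.
Qed.

Lemma has_RInt_le_copy (D F : R -> R) (p q K e m h u v : R) :
  C2_piece D p q K -> e * e = 1 -> m * m = 1 -> u <= v -> v - u = q - p ->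
  (forall s, u <= s <= v -> p <= m * s + h <= q) ->
  (forall s, u < s < v -> p < m * s + h < q /\ F s = e * D (m * s + h)) ->
  has_RInt_le (w22_density F) u v (3 * K ^ 2 * (q - p)).
Proof.
  intros [f [f1 [f2 [d1 [d2 [c2 [B E]]]]]]] He Hm Huv Hlen Hin Hcopy.
  set (H := fun s => f (m * s + h) ^ 2 + f1 (m * s + h) ^ 2 + f2 (m * s + h) ^ 2).
  assert (EF : forall s, u < s < v -> F s = e * f (m * s + h)).
  { intros s Hs; destruct (Hcopy s Hs) as [Hps ->]; rewrite E; auto. }
  assert (CH : forall s, continuous H s).
  { intros s.
    assert (Ca : continuous (fun s => m * s + h) s)
      by (apply (ex_derive_continuous (fun s => m * s + h)); auto_derive; easy).
    assert (C : forall g : R -> R, (forall x, continuous g x) ->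
                  continuous (fun s => g (m * s + h) ^ 2) s).
    { intros g Cg. apply (continuous_comp (fun s => g (m * s + h)) (fun y => y ^ 2)).
      - apply (continuous_comp (fun s => m * s + h) g); auto.
      - apply (ex_derive_continuous (fun y : R => y ^ 2)); auto_derive; easy. }
    apply (continuous_plus (fun s => f (m * s + h) ^ 2 + f1 (m * s + h) ^ 2));
      [apply (continuous_plus (fun s => f (m * s + h) ^ 2))|]; apply C; auto.
    - intros x; apply (ex_derive_continuous f); eexists; apply d1.
    - intros x; apply (ex_derive_continuous f1); eexists; apply d2. }
  assert (IH : ex_RInt H u v)
    by (apply (ex_RInt_continuous (V := R_CompleteNormedModule)); intros; apply CH).
  exists (RInt H u v); split.
  - apply (is_RInt_ext H); [|apply (RInt_correct (V := R_CompleteNormedModule)), IH].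
    intros s Hs; rewrite Rmin_left, Rmax_right in Hs by exact Huv.
    symmetry; apply (w22_density_copy F f f1 f2 e m h u v); auto.
  - replace (3 * K ^ 2 * (q - p)) with (RInt (fun _ => 3 * K ^ 2) u v)
      by (rewrite RInt_const, Hlen; unfold scal; simpl; unfold mult; simpl; ring).
    apply RInt_le; auto; [apply ex_RInt_const|].
    intros s Hs; destruct (B (m * s + h)) as [B0 [B1 B2]]; [apply Hin; lra|].
    apply Rabs_le_between in B0, B1, B2; unfold H; nra.
Qed.

(** * Curves with D_2 symmetry *)

Definition quarter_copies (F D : R -> R) : Prop :=
  exists e1 e2 e3, e1 * e1 = 1 /\ e2 * e2 = 1 /\ e3 * e3 = 1 /\
    (forall s, 0 < s < 1/4 -> F s = D s) /\
    (forall s, 1/4 < s < 1/2 -> F s = e1 * D (1/2 - s)) /\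
    (forall s, 1/2 < s < 3/4 -> F s = e2 * D (s - 1/2)) /\
    (forall s, 3/4 < s < 1 -> F s = e3 * D (1 - s)).

Lemma Gcurve_quarter_copies (l : v3 -> R) (e1 e2 e3 : R) (α β : R -> v3) :
  e1 * e1 = 1 -> e2 * e2 = 1 -> e3 * e3 = 1 ->
  (forall x, l (Rf1 x) = e1 * l x) -> (forall x, l (Rf2 x) = e2 * l x) ->
  (forall x, l (Rf3 x) = e3 * l x) ->
  quarter_copies (fun t => l (Gcurve α t) - l (Gcurve β t)) (fun t => l (α t) - l (β t)).
Proof.
  intros He1 He2 He3 L1 L2 L3.
  exists e1, e2, e3; repeat split; auto; intros s Hs; unfold Gcurve;
    replace (frac_part s) with s
      by (apply (Int_part_frac_part_spec s 0 s); [lra | simpl; ring]);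
    repeat destruct Rlt_dec; try lra; rewrite ?L1, ?L2, ?L3; ring.
Qed.

Lemma Gcurve_coordinate_copies (α β : R -> v3) :
  quarter_copies (fun t => cx (Gcurve α t) - cx (Gcurve β t)) (fun t => cx (α t) - cx (β t)) /\
  quarter_copies (fun t => cy (Gcurve α t) - cy (Gcurve β t)) (fun t => cy (α t) - cy (β t)) /\
  quarter_copies (fun t => cz (Gcurve α t) - cz (Gcurve β t)) (fun t => cz (α t) - cz (β t)).
Proof.
  split; [|split];
    [apply (Gcurve_quarter_copies cx 1 (-1) (-1)) | apply (Gcurve_quarter_copies cy (-1) 1 (-1))
    | apply (Gcurve_quarter_copies cz (-1) (-1) 1)];
    try ring; intros; unfold Rf1, Rf2, Rf3, cx, cy, cz, mk3; simpl; ring.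
Qed.

Definition scale_z (z : R) (x : v3) : v3 := mk3 (cx x) (cy x) (z * cz x).

Lemma scale_z_Gcurve (z : R) (α : R -> v3) (t : R) :
  scale_z z (Gcurve α t) = Gcurve (fun s => scale_z z (α s)) t.
Proof.
  unfold Gcurve; repeat destruct Rlt_dec;
    unfold scale_z, Rf1, Rf2, Rf3, cx, cy, cz, mk3; simpl; f_equal; ring.
Qed.

Lemma quarter_copies_integral (F D : R -> R) (p q K : R) :
  quarter_copies F D -> C2_piece D p q K -> 0 <= p <= q -> q <= 1/4 ->
  let B := 3 * K ^ 2 * (q - p) in
  has_RInt_le (w22_density F) p q B /\
  has_RInt_le (w22_density F) (1/2 - q) (1/2 - p) B /\
  has_RInt_le (w22_density F) (1/2 + p) (1/2 + q) B /\
  has_RInt_le (w22_density F) (1 - q) (1 - p) B.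
Proof.
  intros [e1 [e2 [e3 [He1 [He2 [He3 [Q0 [Q1 [Q2 Q3]]]]]]]]] HD Hpq Hq B.
  repeat split.
  - apply (has_RInt_le_copy D F p q K 1 1 0); auto; try lra; try (intros s Hs; lra).
    intros s Hs; split; [lra|]; rewrite Q0 by lra; replace (1 * s + 0) with s by ring; ring.
  - apply (has_RInt_le_copy D F p q K e1 (-1) (1/2)); auto; try lra; try (intros s Hs; lra).
    intros s Hs; split; [lra|]; rewrite Q1 by lra.
    replace (-1 * s + 1/2) with (1/2 - s) by ring; ring.
  - apply (has_RInt_le_copy D F p q K e2 1 (-1/2)); auto; try lra; try (intros s Hs; lra).
    intros s Hs; split; [lra|]; rewrite Q2 by lra.
    replace (1 * s + -1/2) with (s - 1/2) by field; ring.
  - apply (has_RInt_le_copy D F p q K e3 (-1) 1); auto; try lra; try (intros s Hs; lra).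
    intros s Hs; split; [lra|]; rewrite Q3 by lra; replace (-1 * s + 1) with (1 - s) by ring; ring.
Qed.

Lemma W22sq_le_of_pieces (F D : R -> R) (p c K0 Kc : R) :
  quarter_copies F D -> 0 <= p <= c -> c <= 1/4 - c ->
  C2_piece D 0 p K0 -> C2_piece D p c K0 -> C2_piece D c (1/4 - c) Kc ->
  C2_piece D (1/4 - c) (1/4) K0 ->
  W22sq F <= 12 * (K0 ^ 2 * (2 * c) + Kc ^ 2 * (1/4)).
Proof.
  intros HF Hp Hc PA PB PC PE.
  destruct (quarter_copies_integral F D 0 p K0 HF PA) as [A1 [A2 [A3 A4]]]; try lra.
  destruct (quarter_copies_integral F D p c K0 HF PB) as [B1 [B2 [B3 B4]]]; try lra.
  destruct (quarter_copies_integral F D c (1/4 - c) Kc HF PC) as [C1 [C2 [C3 C4]]]; try lra.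
  destruct (quarter_copies_integral F D (1/4 - c) (1/4) K0 HF PE) as [E1 [E2 [E3 E4]]]; try lra.
  pose proof (has_RInt_le_Chasles _ _ _ _ _ _ (has_RInt_le_Chasles _ _ _ _ _ _
                (has_RInt_le_Chasles _ _ _ _ _ _ A1 B1) C1) E1) as Q1.
  pose proof (has_RInt_le_Chasles _ _ _ _ _ _ (has_RInt_le_Chasles _ _ _ _ _ _
                (has_RInt_le_Chasles _ _ _ _ _ _ E2 C2) B2) A2) as Q2.
  pose proof (has_RInt_le_Chasles _ _ _ _ _ _ (has_RInt_le_Chasles _ _ _ _ _ _
                (has_RInt_le_Chasles _ _ _ _ _ _ A3 B3) C3) E3) as Q3.
  pose proof (has_RInt_le_Chasles _ _ _ _ _ _ (has_RInt_le_Chasles _ _ _ _ _ _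
                (has_RInt_le_Chasles _ _ _ _ _ _ E4 C4) B4) A4) as Q4.
  replace (1/2 - 1/4) with (1/4) in Q2 by field.
  replace (1/2 - 0) with (1/2) in Q2 by ring.
  replace (1/2 + 0) with (1/2) in Q3 by ring.
  replace (1/2 + 1/4) with (1 - 1/4) in Q3 by field.
  replace (1 - 0) with 1 in Q4 by ring.
  destruct (has_RInt_le_Chasles _ _ _ _ _ _ (has_RInt_le_Chasles _ _ _ _ _ _
              (has_RInt_le_Chasles _ _ _ _ _ _ Q1 Q2) Q3) Q4) as [I [HI HIB]].
  change (RInt (w22_density F) 0 1 <= 12 * (K0 ^ 2 * (2 * c) + Kc ^ 2 * (1/4))).
  rewrite (is_RInt_unique _ _ _ _ HI).
  assert (0 <= Kc ^ 2 * c) by (apply Rmult_le_pos; [apply pow2_ge_0 | lra]).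
  nra.
Qed.

(** * The curves tpc[pi] and g^eps *)

Lemma PI_bounds : 2 < PI <= 4 /\ 0 < / (4 * PI) <= 1/8.
Proof.
  pose proof PI2_1; pose proof PI_4.
  assert (0 < / (4 * PI)) by (apply Rinv_0_lt_compat; lra).
  repeat split; try lra.
  apply (Rmult_le_reg_l (4 * PI)); [lra|]; rewrite Rinv_r; lra.
Qed.

Lemma C2_piece_alpha2_x (p q : R) : C2_piece (fun t => cx (alpha2 t)) p q 16.
Proof.
  destruct PI_bounds as [HPI HR].
  apply (C2_piece_intro _ (fun t => / (4 * PI) * (1 - cos (4 * PI * t)))
           (fun t => sin (4 * PI * t)) (fun t => 4 * PI * cos (4 * PI * t))).
  - intros x; auto_derive; [easy | field; lra].
  - intros x; auto_derive; [easy | ring].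
  - intros x; apply (ex_derive_continuous (fun t => 4 * PI * cos (4 * PI * t))); auto_derive; easy.
  - intros t _; pose proof (COS_bound (4 * PI * t)); pose proof (SIN_bound (4 * PI * t)).
    repeat split; apply Rabs_le; split; nra.
  - reflexivity.
Qed.

Lemma C2_piece_alpha2_y (p q : R) : C2_piece (fun t => cy (alpha2 t)) p q 16.
Proof.
  destruct PI_bounds as [HPI HR].
  apply (C2_piece_intro _ (fun t => / (4 * PI) * sin (4 * PI * t))
           (fun t => cos (4 * PI * t)) (fun t => - (4 * PI * sin (4 * PI * t)))).
  - intros x; auto_derive; [easy | field; lra].
  - intros x; auto_derive; [easy | ring].
  - intros x; apply (ex_derive_continuous (fun t => - (4 * PI * sin (4 * PI * t)))).
    auto_derive; easy.
  - intros t _; pose proof (COS_bound (4 * PI * t)); pose proof (SIN_bound (4 * PI * t)).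
    repeat split; apply Rabs_le; split; nra.
  - reflexivity.
Qed.

Section ArcComparison.

Variables (r c ρ δ p q : R).
Hypotheses (Hr : 0 < r) (Hrad : Rabs (r - / (4 * PI)) <= δ)
  (Hcurv : Rabs (/ r - 4 * PI) <= δ)
  (Hangle : forall t, p <= t <= q -> Rabs (/ r * (t - c) - 4 * PI * t) <= δ).

Lemma C2_piece_arc_x : Rabs ρ <= δ ->
  C2_piece (fun t => (ρ + r - r * cos (/ r * (t - c))) - / (4 * PI) * (1 - cos (4 * PI * t)))
    p q (17 * δ).
Proof.
  intros Hρ. destruct PI_bounds as [HPI HR].
  apply (C2_piece_intro _
           (fun t => (ρ + r - r * cos (/ r * (t - c))) - / (4 * PI) * (1 - cos (4 * PI * t)))
           (fun t => sin (/ r * (t - c)) - sin (4 * PI * t))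
           (fun t => / r * cos (/ r * (t - c)) - 4 * PI * cos (4 * PI * t))); auto.
  - intros x; auto_derive; [easy | unfold Rminus; field; lra].
  - intros x; auto_derive; [easy | unfold Rminus; ring].
  - intros x.
    apply (ex_derive_continuous (fun t => / r * cos (/ r * (t - c)) - 4 * PI * cos (4 * PI * t))).
    auto_derive; easy.
  - intros t Ht.
    set (u := / r * (t - c)); set (v := 4 * PI * t).
    assert (Hcos : Rabs (cos u - cos v) <= δ)
      by (eapply Rle_trans; [apply Rabs_cos_sub_le | apply Hangle, Ht]).
    assert (Hsin : Rabs (sin u - sin v) <= δ)
      by (eapply Rle_trans; [apply Rabs_sin_sub_le | apply Hangle, Ht]).
    pose proof (Rabs_mult_le _ _ _ _ Hrad (Rabs_cos_le_1 u)) as M1.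
    pose proof (Rabs_mult_le _ _ _ _ Hcurv (Rabs_cos_le_1 u)) as M2.
    pose proof (Rabs_mult_le (/ (4 * PI)) _ (1/8) _ ltac:(rewrite Rabs_pos_eq; lra) Hcos) as M3.
    pose proof (Rabs_mult_le (4 * PI) _ 16 _ ltac:(rewrite Rabs_pos_eq; lra) Hcos) as M4.
    pose proof (proj1 (Rabs_le_between _ _) Hrad).
    apply Rabs_le_between in Hρ, Hcos, Hsin, M1, M2, M3, M4.
    repeat split; apply Rabs_le; split; lra.
Qed.

Lemma C2_piece_arc_y : Rabs c <= δ ->
  C2_piece (fun t => (c + r * sin (/ r * (t - c))) - / (4 * PI) * sin (4 * PI * t)) p q (17 * δ).
Proof.
  intros Hc. destruct PI_bounds as [HPI HR].
  apply (C2_piece_intro _ (fun t => (c + r * sin (/ r * (t - c))) - / (4 * PI) * sin (4 * PI * t))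
           (fun t => cos (/ r * (t - c)) - cos (4 * PI * t))
           (fun t => - (/ r * sin (/ r * (t - c))) + 4 * PI * sin (4 * PI * t))); auto.
  - intros x; auto_derive; [easy | unfold Rminus; field; lra].
  - intros x; auto_derive; [easy | unfold Rminus; ring].
  - intros x.
    apply (ex_derive_continuous
             (fun t => - (/ r * sin (/ r * (t - c))) + 4 * PI * sin (4 * PI * t))).
    auto_derive; easy.
  - intros t Ht.
    set (u := / r * (t - c)); set (v := 4 * PI * t).
    assert (Hcos : Rabs (cos u - cos v) <= δ)
      by (eapply Rle_trans; [apply Rabs_cos_sub_le | apply Hangle, Ht]).
    assert (Hsin : Rabs (sin u - sin v) <= δ)
      by (eapply Rle_trans; [apply Rabs_sin_sub_le | apply Hangle, Ht]).
    pose proof (Rabs_mult_le _ _ _ _ Hrad (Rabs_sin_le_1 u)) as M1.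
    pose proof (Rabs_mult_le _ _ _ _ Hcurv (Rabs_sin_le_1 u)) as M2.
    pose proof (Rabs_mult_le (/ (4 * PI)) _ (1/8) _ ltac:(rewrite Rabs_pos_eq; lra) Hsin) as M3.
    pose proof (Rabs_mult_le (4 * PI) _ 16 _ ltac:(rewrite Rabs_pos_eq; lra) Hsin) as M4.
    pose proof (proj1 (Rabs_le_between _ _) Hrad).
    apply Rabs_le_between in Hc, Hcos, Hsin, M1, M2, M3, M4.
    repeat split; apply Rabs_le; split; lra.
Qed.

End ArcComparison.

Section StadiumCurve.

Variables (n : nat) (eps : R).
Hypotheses (Hn : 1 < INR n) (Heps : 0 < eps) (Hsmall : (INR n + 1) * eps <= 1/8).

Local Notation L := ((INR n + 1) * eps).
Local Notation c := ((INR n + 1) * eps / 2).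
Local Notation p := ((INR n - 1) * eps / 2).

Lemma time_rescaled (t : R) : t = t / eps * eps.
Proof. field; lra. Qed.

Lemma eps_small : eps <= 1/16.
Proof. nra. Qed.

Lemma phi_eps_linear (t : R) : t <= p -> phi_eps n eps t = PI * (t / eps).
Proof.
  intros Ht; pose proof (time_rescaled t); unfold phi_eps, phi_b.
  destruct Rle_dec; [reflexivity | nra].
Qed.

Lemma phi_eps_bend (t : R) : p < t <= c ->
  phi_eps n eps t = PI * (INR n / 2 - / 2 * (t / eps - (INR n + 1) / 2) ^ 2).
Proof.
  intros Ht; pose proof (time_rescaled t); unfold phi_eps, phi_b.
  destruct Rle_dec; [nra|]; destruct Rle_dec; [reflexivity | nra].
Qed.

Lemma C2_piece_helix_linear (σ θ : R) : -1 <= σ <= 1 ->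
  C2_piece (fun t => eps ^ 2 * σ * sin (θ + phi_eps n eps t)) 0 p 20.
Proof.
  intros Hσ. destruct PI_bounds as [HPI _].
  apply (C2_piece_ext _ (fun t => eps ^ 2 * σ * sin (θ + PI * (t / eps)))).
  { intros t Ht; rewrite phi_eps_linear by lra; reflexivity. }
  apply (C2_piece_sin_phase _ 0 _ _ _ _ (fun _ => PI / eps)).
  - intros x; auto_derive; [easy | field; lra].
  - intros x; auto_derive; [easy | ring].
  - intros t Ht.
    replace (eps ^ 2 * σ * (PI / eps) * (PI / eps)) with (σ * PI * PI) by (field; lra).
    replace (eps ^ 2 * σ * (PI / eps)) with (σ * eps * PI) by (field; lra).
    rewrite Rmult_0_r, Rabs_R0, Rplus_0_l.
    pose proof eps_small.
    assert (0 <= PI * PI <= 16) by nra; assert (0 <= eps * PI <= 1) by nra.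
    assert (0 <= eps ^ 2 <= 1) by nra.
    repeat split; apply Rabs_le; split; nra.
Qed.

Lemma C2_piece_helix_bend (σ θ : R) : -1 <= σ <= 1 ->
  C2_piece (fun t => eps ^ 2 * σ * sin (θ + phi_eps n eps t)) p c 20.
Proof.
  intros Hσ. destruct PI_bounds as [HPI _].
  set (w := fun t => t / eps - (INR n + 1) / 2).
  apply (C2_piece_ext _ (fun t => eps ^ 2 * σ * sin (θ + PI * (INR n / 2 - / 2 * w t ^ 2)))).
  { intros t Ht; rewrite phi_eps_bend by lra; reflexivity. }
  apply (C2_piece_sin_phase _ (- (PI / (eps * eps))) _ _ _ _ (fun t => - (PI * w t / eps))).
  - intros x; unfold w; auto_derive; [easy | field; lra].
  - intros x; unfold w; auto_derive; [easy | field; lra].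
  - intros t Ht.
    assert (Hw : -1 <= w t <= 1).
    { pose proof (time_rescaled t); unfold w; split; nra. }
    replace (eps ^ 2 * σ * - (PI * w t / eps) * - (PI * w t / eps))
      with (σ * (w t * w t) * PI * PI) by (field; lra).
    replace (eps ^ 2 * σ * - (PI * w t / eps)) with (- (σ * w t * eps * PI)) by (field; lra).
    replace (eps ^ 2 * σ * - (PI / (eps * eps))) with (- (σ * PI)) by (field; lra).
    pose proof eps_small.
    assert (0 <= PI * PI <= 16) by nra; assert (0 <= eps * PI <= 1) by nra.
    assert (0 <= eps ^ 2 <= 1) by nra.
    assert (-1 <= σ * w t <= 1) by nra.
    assert (-1 <= σ * (w t * w t) <= 1) by nra.
    rewrite !Rabs_Ropp; repeat split; try (apply Rabs_le; split; nra).
    apply Rle_trans with (4 + 16); [apply Rplus_le_compat; apply Rabs_le; split; nra | lra].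
Qed.

Lemma alpha_eps_helix (t : R) : t <= c -> alpha_eps n eps t = helix n eps t.
Proof. intros Ht; unfold alpha_eps; destruct Rle_dec; [reflexivity | lra]. Qed.

Lemma alpha_eps_arc (t : R) : c < t <= 1/4 - c ->
  alpha_eps n eps t =
  mk3 (rho_eps eps + r_eps n eps - r_eps n eps * cos (/ r_eps n eps * (t - c)))
      (c + r_eps n eps * sin (/ r_eps n eps * (t - c))) 0.
Proof.
  intros Ht; unfold alpha_eps, stadium.
  destruct Rle_dec; [lra|]; destruct Rle_dec; [reflexivity | lra].
Qed.

Lemma alpha_eps_segment (t : R) : 1/4 - c < t ->
  alpha_eps n eps t = mk3 (rho_eps eps + 2 * r_eps n eps) (/4 - t) 0.
Proof.
  intros Ht; unfold alpha_eps, stadium.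
  destruct Rle_dec; [lra|]; destruct Rle_dec; [lra | reflexivity].
Qed.

Lemma stadium_radius_close :
  0 < r_eps n eps <= 1/8 /\ Rabs (r_eps n eps - / (4 * PI)) <= 128 * L /\
  Rabs (/ r_eps n eps - 4 * PI) <= 128 * L /\
  (forall t, 0 <= t <= 1/4 -> Rabs (/ r_eps n eps * (t - c) - 4 * PI * t) <= 128 * L).
Proof.
  destruct PI_bounds as [HPI _].
  assert (HL : 0 < L) by nra.
  unfold r_eps; set (l := (INR n + 1) * eps) in *.
  set (k := / (/4 - l)).
  assert (Hk : 0 < k <= 8).
  { split; [apply Rinv_0_lt_compat; lra|].
    replace 8 with (/ (1/8)) by field; apply Rinv_le_contravar; lra. }
  assert (Hip : 0 < / PI <= 1/2).
  { split; [apply Rinv_0_lt_compat; lra|].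
    replace (1/2) with (/ 2) by field; apply Rinv_le_contravar; lra. }
  assert (Er : (/4 - l) / PI - / (4 * PI) = - (l * / PI)) by (field; lra).
  assert (Einv : / ((/4 - l) / PI) = 4 * PI + 4 * PI * l * k) by (unfold k; field; lra).
  assert (0 <= PI * k <= 32) by nra.
  repeat split.
  - unfold Rdiv; apply Rmult_lt_0_compat; lra.
  - unfold Rdiv; nra.
  - rewrite Er, Rabs_Ropp; apply Rabs_le; split; nra.
  - rewrite Einv; apply Rabs_le; split; nra.
  - intros t Ht; rewrite Einv.
    replace ((4 * PI + 4 * PI * l * k) * (t - l / 2) - 4 * PI * t)
      with (4 * PI * l * (k * t - / 2 - k * l / 2)) by field.
    assert (-1 <= k * t - / 2 - k * l / 2 <= 2) by nra.
    assert (0 <= PI * l <= 4 * l) by nra.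
    apply Rabs_le; split; nra.
Qed.

Variable z : R.
Hypothesis Hz : z * z = 1.

Local Notation σ := ((-1) ^ ((n - 1) / 2)%nat).
Local Notation gap l := (fun t => l (scale_z z (alpha_eps n eps t)) - l (alpha2 t)).
Local Notation Kc := (17 * (128 * L)).

(* Coordinates are written in the shapes [a + b * t] and
   [eps ^ 2 * s * sin (θ + phi_eps n eps t)] expected by [C2_piece_affine] and
   the helix lemmas. *)
Lemma scaled_arc_on_helix (t : R) : t <= c ->
  scale_z z (alpha_eps n eps t) =
  mk3 (eps ^ 2 * σ * sin (0 + phi_eps n eps t)) (0 + 1 * t)
      (eps ^ 2 * z * sin (PI / 2 + phi_eps n eps t)).
Proof.
  intros Ht; rewrite alpha_eps_helix by exact Ht.
  unfold scale_z, helix, rho_eps, cx, cy, cz, mk3; simpl.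
  rewrite Rplus_0_l, <- cos_sin; f_equal; [f_equal|]; ring.
Qed.

Lemma scaled_arc_on_arc (t : R) : c < t <= 1/4 - c ->
  scale_z z (alpha_eps n eps t) =
  mk3 (rho_eps eps + r_eps n eps - r_eps n eps * cos (/ r_eps n eps * (t - c)))
      (c + r_eps n eps * sin (/ r_eps n eps * (t - c))) (0 + 0 * t).
Proof.
  intros Ht; rewrite alpha_eps_arc by exact Ht.
  unfold scale_z, cx, cy, cz, mk3; simpl; f_equal; ring.
Qed.

Lemma scaled_arc_on_segment (t : R) : 1/4 - c < t ->
  scale_z z (alpha_eps n eps t) =
  mk3 ((rho_eps eps + 2 * r_eps n eps) + 0 * t) (/4 + -1 * t) (0 + 0 * t).
Proof.
  intros Ht; rewrite alpha_eps_segment by exact Ht.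
  unfold scale_z, cx, cy, cz, mk3; simpl; f_equal; [f_equal|]; ring.
Qed.

Lemma signs_bounded : -1 <= σ <= 1 /\ -1 <= z <= 1.
Proof.
  assert (Hσ : Rabs σ <= 1) by (rewrite pow_1_abs; lra).
  apply Rabs_le_between in Hσ; split; [lra | nra].
Qed.

Lemma gap_x_pieces :
  C2_piece (gap cx) 0 p 36 /\ C2_piece (gap cx) p c 36 /\
  C2_piece (gap cx) c (1/4 - c) Kc /\ C2_piece (gap cx) (1/4 - c) (1/4) 36.
Proof.
  destruct signs_bounded as [Hσ _]; pose proof eps_small.
  destruct stadium_radius_close as [Hr [Hrad [Hcurv Hangle]]].
  split; [|split; [|split]].
  - apply (C2_piece_weaken _ _ _ (20 + 16)); [lra|].
    apply (C2_piece_ext _ (fun t => eps ^ 2 * σ * sin (0 + phi_eps n eps t) - cx (alpha2 t))).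
    { intros t Ht; rewrite scaled_arc_on_helix by lra; reflexivity. }
    apply C2_piece_sub; [apply C2_piece_helix_linear | apply C2_piece_alpha2_x]; lra.
  - apply (C2_piece_weaken _ _ _ (20 + 16)); [lra|].
    apply (C2_piece_ext _ (fun t => eps ^ 2 * σ * sin (0 + phi_eps n eps t) - cx (alpha2 t))).
    { intros t Ht; rewrite scaled_arc_on_helix by lra; reflexivity. }
    apply C2_piece_sub; [apply C2_piece_helix_bend | apply C2_piece_alpha2_x]; lra.
  - apply (C2_piece_ext _ (fun t =>
      (rho_eps eps + r_eps n eps - r_eps n eps * cos (/ r_eps n eps * (t - c)))
      - / (4 * PI) * (1 - cos (4 * PI * t)))).
    { intros t Ht; rewrite scaled_arc_on_arc by lra; reflexivity. }
    apply C2_piece_arc_x; try lra; auto.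
    + intros t Ht; apply Hangle; nra.
    + unfold rho_eps; rewrite Rabs_pos_eq; nra.
  - apply (C2_piece_weaken _ _ _ (1 + 16)); [lra|].
    apply (C2_piece_ext _ (fun t => ((rho_eps eps + 2 * r_eps n eps) + 0 * t) - cx (alpha2 t))).
    { intros t Ht; rewrite scaled_arc_on_segment by lra; reflexivity. }
    apply C2_piece_sub; [apply C2_piece_affine | apply C2_piece_alpha2_x].
    + lra.
    + rewrite Rabs_R0; lra.
    + intros t _; unfold rho_eps; rewrite Rabs_pos_eq; nra.
Qed.

Lemma gap_y_pieces :
  C2_piece (gap cy) 0 p 36 /\ C2_piece (gap cy) p c 36 /\
  C2_piece (gap cy) c (1/4 - c) Kc /\ C2_piece (gap cy) (1/4 - c) (1/4) 36.
Proof.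
  pose proof eps_small.
  destruct stadium_radius_close as [Hr [Hrad [Hcurv Hangle]]].
  assert (Hhelix : C2_piece (gap cy) 0 c 36).
  { apply (C2_piece_weaken _ _ _ (1 + 16)); [lra|].
    apply (C2_piece_ext _ (fun t => (0 + 1 * t) - cy (alpha2 t))).
    { intros t Ht; rewrite scaled_arc_on_helix by lra; reflexivity. }
    apply C2_piece_sub; [apply C2_piece_affine | apply C2_piece_alpha2_y].
    + lra.
    + rewrite Rabs_R1; lra.
    + intros t Ht; apply Rabs_le; nra. }
  split; [|split; [|split]].
  - apply (C2_piece_restrict _ 0 c); [lra | nra | exact Hhelix].
  - apply (C2_piece_restrict _ 0 c); [nra | lra | exact Hhelix].
  - apply (C2_piece_ext _ (fun t =>
      (c + r_eps n eps * sin (/ r_eps n eps * (t - c))) - / (4 * PI) * sin (4 * PI * t))).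
    { intros t Ht; rewrite scaled_arc_on_arc by lra; reflexivity. }
    apply C2_piece_arc_y; try lra; auto.
    + intros t Ht; apply Hangle; nra.
    + rewrite Rabs_pos_eq; nra.
  - apply (C2_piece_weaken _ _ _ (1 + 16)); [lra|].
    apply (C2_piece_ext _ (fun t => (/4 + -1 * t) - cy (alpha2 t))).
    { intros t Ht; rewrite scaled_arc_on_segment by lra; reflexivity. }
    apply C2_piece_sub; [apply C2_piece_affine | apply C2_piece_alpha2_y].
    + lra.
    + apply Rabs_le; lra.
    + intros t Ht; apply Rabs_le; nra.
Qed.

Lemma gap_z_pieces :
  C2_piece (gap cz) 0 p 36 /\ C2_piece (gap cz) p c 36 /\
  C2_piece (gap cz) c (1/4 - c) Kc /\ C2_piece (gap cz) (1/4 - c) (1/4) 36.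
Proof.
  destruct signs_bounded as [_ Hz1].
  assert (Hzero : forall q q' K, 0 <= K -> c <= q -> C2_piece (gap cz) q q' K).
  { intros q q' K HK Hq.
    apply (C2_piece_ext _ (fun t => 0 + 0 * t)).
    { intros t Ht; destruct (Rle_lt_dec t (1/4 - c)).
      - rewrite scaled_arc_on_arc by lra; unfold cz, alpha2, mk3; simpl; ring.
      - rewrite scaled_arc_on_segment by lra; unfold cz, alpha2, mk3; simpl; ring. }
    apply C2_piece_affine; auto;
      [rewrite Rabs_R0 | intros t _; rewrite Rmult_0_l, Rplus_0_l, Rabs_R0]; lra. }
  split; [|split; [|split]].
  - apply (C2_piece_weaken _ _ _ (20 + 0)); [lra|].
    apply (C2_piece_ext _ (fun t => eps ^ 2 * z * sin (PI / 2 + phi_eps n eps t) - (0 + 0 * t))).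
    { intros t Ht; rewrite scaled_arc_on_helix by lra; unfold cz, alpha2, mk3; simpl; ring. }
    apply C2_piece_sub; [apply C2_piece_helix_linear; lra | apply C2_piece_affine].
    + lra.
    + rewrite Rabs_R0; lra.
    + intros t _; rewrite Rmult_0_l, Rplus_0_l, Rabs_R0; lra.
  - apply (C2_piece_weaken _ _ _ (20 + 0)); [lra|].
    apply (C2_piece_ext _ (fun t => eps ^ 2 * z * sin (PI / 2 + phi_eps n eps t) - (0 + 0 * t))).
    { intros t Ht; rewrite scaled_arc_on_helix by lra; unfold cz, alpha2, mk3; simpl; ring. }
    apply C2_piece_sub; [apply C2_piece_helix_bend; lra | apply C2_piece_affine].
    + lra.
    + rewrite Rabs_R0; lra.
    + intros t _; rewrite Rmult_0_l, Rplus_0_l, Rabs_R0; lra.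
  - apply Hzero; [nra | lra].
  - apply Hzero; nra.
Qed.

(* Per coordinate, [W22sq_le_of_pieces] gives 12 (36^2 L + (2176 L)^2 / 4),
   which is below 1.8e6 L because L <= 1/8. *)
Lemma W22dist_stadium_le :
  W22dist (Gcurve (fun t => scale_z z (alpha_eps n eps t))) tpc_pi <= sqrt (6000000 * L).
Proof.
  pose proof eps_small; assert (HL : 0 < L) by nra.
  assert (Hp : 0 <= p <= c) by nra; assert (Hc : c <= 1/4 - c) by lra.
  destruct gap_x_pieces as [X1 [X2 [X3 X4]]].
  destruct gap_y_pieces as [Y1 [Y2 [Y3 Y4]]].
  destruct gap_z_pieces as [Z1 [Z2 [Z3 Z4]]].
  destruct (Gcurve_coordinate_copies (fun t => scale_z z (alpha_eps n eps t)) alpha2)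
    as [Qx [Qy Qz]].
  pose proof (W22sq_le_of_pieces _ _ _ _ _ _ Qx Hp Hc X1 X2 X3 X4) as Bx.
  pose proof (W22sq_le_of_pieces _ _ _ _ _ _ Qy Hp Hc Y1 Y2 Y3 Y4) as By.
  pose proof (W22sq_le_of_pieces _ _ _ _ _ _ Qz Hp Hc Z1 Z2 Z3 Z4) as Bz.
  unfold W22dist, tpc_pi; apply sqrt_le_1_alt.
  set (l := L) in *. nra.
Qed.

End StadiumCurve.

Lemma g_eps_scaled_Gcurve (b : Z) :
  Z.odd b = true -> b <> 1%Z -> b <> (-1)%Z ->
  exists (n : nat) (z : R), 1 < INR n /\ z * z = 1 /\
    forall eps, g_eps b eps = Gcurve (fun s => scale_z z (alpha_eps n eps s)).
Proof.
  intros Hodd H1 Hm1.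
  assert (Hb : (3 <= b \/ b <= -3)%Z)
    by (apply Z.odd_spec in Hodd; destruct Hodd as [m Hm]; lia).
  unfold g_eps; destruct (Z.ltb_spec 0 b) as [Hpos | Hneg].
  - exists (Z.to_nat b), 1; split; [|split; [ring|]].
    + apply (lt_INR 1); lia.
    + intros eps; unfold g_pos; f_equal; apply functional_extensionality; intros s.
      unfold scale_z; destruct (alpha_eps _ eps s) as [[x y] w]; unfold cx, cy, cz, mk3; simpl.
      f_equal; ring.
  - exists (Z.to_nat (- b)), (-1); split; [|split; [ring|]].
    + apply (lt_INR 1); lia.
    + intros eps; apply functional_extensionality; intros t.
      unfold g_pos; rewrite <- scale_z_Gcurve; unfold reflz, scale_z; f_equal; ring.
Qed.

Lemma filterlim_at_right_0_of_sqrt_bound (F : R -> R) (M e0 : R) :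
  0 < e0 -> (forall eps, 0 < eps < e0 -> 0 <= F eps <= sqrt (M * eps)) ->
  filterlim F (at_right 0) (locally 0).
Proof.
  intros He0 HF.
  apply (@filterlim_le_le _ (at_right 0) (@filter_filter _ _ (at_right_proper_filter 0))
           (fun _ => 0) F (fun eps => sqrt (M * eps)) 0).
  - exists (mkposreal e0 He0); intros y Hy Hy0; apply HF; split; [exact Hy0|].
    unfold ball in Hy; simpl in Hy; unfold AbsRing_ball, abs, minus, plus, opp in Hy; simpl in Hy.
    apply Rabs_lt_between in Hy; lra.
  - apply filterlim_const.
  - apply (filterlim_filter_le_1 (F := locally 0)); [apply filter_le_within|].
    replace (Rbar_locally 0) with (locally (sqrt (M * 0)))
      by (rewrite Rmult_0_r, sqrt_0; reflexivity).
    apply continuous_sqrt_comp, (ex_derive_continuous (fun x => M * x)); auto_derive; easy.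
Qed.

Theorem lemma5p1 (b : Z) :
  Z.odd b = true -> b <> 1%Z -> b <> (-1)%Z ->
  filterlim (fun eps => W22dist (g_eps b eps) tpc_pi) (at_right 0) (locally 0).
Proof.
  intros Hodd H1 Hm1.
  destruct (g_eps_scaled_Gcurve b Hodd H1 Hm1) as [n [z [Hn [Hz Hg]]]].
  apply (filterlim_at_right_0_of_sqrt_bound _ (6000000 * (INR n + 1)) (/ (8 * (INR n + 1)))).
  - apply Rinv_0_lt_compat; lra.
  - intros eps Heps; rewrite Hg; split; [apply sqrt_pos|].
    assert (Hsmall : eps * (INR n + 1) < / (8 * (INR n + 1)) * (INR n + 1))
      by (apply Rmult_lt_compat_r; lra).
    replace (/ (8 * (INR n + 1)) * (INR n + 1)) with (1/8) in Hsmall by (field; lra).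
    rewrite Rmult_assoc; apply W22dist_stadium_le; auto; lra.
Qed.
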